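(* Let $k\ge r\ge 3$ and $p,t\ge0$ be integers, let $N_2\ge 0$, and let $\pi\in\mathbb{C}_{<}(k,r|p,t)$ be a partition with exactly $N_2$ parts marked $2$ in $GG(\pi)$. Then $p+t\ge N_2$.
   Context: A partition $\pi=(\pi_1,\dots,\pi_\ell)$ is a finite non-increasing sequence of positive integers; ''$a$ occurs in $\pi$'' means $a=\pi_i$ for some $i$. Göllnitz–Gordon marking: $GG(\pi)$ assigns a positive integer (mark) to each part, processing the parts from smallest to largest ($\pi_\ell,\dots,\pi_1$); $\pi_i$ receives the smallest positive integer different from the marks of all parts $\pi_g$ with $g>i$ and $\pi_i-\pi_g\le 2$, where $\pi_i-\pi_g<2$ is required when $\pi_i$ is odd. An ''$r$-marked part $a$'' is a part equal to $a$ with mark $r$. $N_i(\pi)$ is the number of parts with mark $i$; $\pi^{(i)}_1\ge\dots\ge\pi^{(i)}_{N_i(\pi)}$ are the parts with mark $i$, with $\pi^{(i)}_0=+\infty$, $\pi^{(i)}_{N_i(\pi)+1}=-\infty$. $\mathbb{C}(k,r)$: partitions with (i) no odd part repeated; (ii) $\pi_i\ge\pi_{i+k-1}+2$ for $1\le i\le\ell-k+1$, strict if $\pi_i$ even; (iii) at most $r-1$ parts $\le 2$. Starting types: for $\pi\in\mathbb{C}(k,r)$ with $N_2=N_2(\pi)\ge1$, let $l$ be the largest integer in $\{0,\dots,N_2\}$ such that no odd part of $\pi$ is $\ge\pi^{(2)}_l$; for $l<i\le N_2$, $\pi^{(2)}_i$ has type $s_{-1}$. For $b=1,\dots,l$ in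 increasing order, type and auxiliary $\sigma_b$: for $b=1$: Case 1: 1-marked part $\pi^{(2)}_1-1$ exists and $\pi^{(2)}_1+2$ does not occur: type $s_0$, $\sigma_1=\pi^{(2)}_1-1$; Case 2: 1-marked $\pi^{(2)}_1-2$ exists and $\pi^{(2)}_1+2$ does not occur: type $s_1$, $\sigma_1=\pi^{(2)}_1-2$; Case 3: 1-marked $\pi^{(2)}_1+2$ exists: type $s_2$, $\sigma_1=\pi^{(2)}_1+2$; Case 4: 1-marked $\pi^{(2)}_1$ exists: type $s_3$, $\sigma_1=\pi^{(2)}_1$. For $2\le b\le l$: Case 1: 1-marked $\pi^{(2)}_b-1$ exists and, if a 1-marked $\pi^{(2)}_b+2$ exists, $\sigma_{b-1}=\pi^{(2)}_b+2$: type $s_0$, $\sigma_b=\pi^{(2)}_b-1$; Case 2: same with $\pi^{(2)}_b-2$: type $s_1$, $\sigma_b=\pi^{(2)}_b-2$; Case 3: 1-marked $\pi^{(2)}_b+2$ exists and $\sigma_{b-1}\ne\pi^{(2)}_b+2$: type $s_2$, $\sigma_b=\pi^{(2)}_b+2$; Case 4: 1-marked $\pi^{(2)}_b$ exists: type $s_3$, $\sigma_b=\pi^{(2)}_b$. $\mathbb{C}_{<}(k,r|p,t)$: the set of $\pi\in\mathbb{C}(k,r)$ such that (1) no odd part is $\ge 2t+1$; (2) $\pi^{(2)}_{p+1}<2t+1<\pi^{(2)}_p$ (in particular $p\le N_2(\pi)$); (3) if $\pi^{(2)}_p=2t+2$ then it is of starting type $s_2$ or $s_3$; (4) if $\pi^{(2)}_{p+1}=2t$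 then it is of starting type $s_0$ or $s_1$. *)

(* Partitions are represented as non-increasing seq nat
   (pi_1 = nth 0 s 0, ..., pi_l = nth 0 s (l-1)). *)
From mathcomp Require Import all_boot.
Set Implicit Arguments. Unset Strict Implicit. Unset Printing Implicit Defensive.

Definition is_partition (s : seq nat) : bool :=
  sorted geq s && all (fun x => 0 < x) s.

Definition mex1 (L : seq nat) : nat :=
  nth 0 [seq n <- iota 1 (size L).+1 | n \notin L] 0.

(* GG condition between pi_i = x and a smaller-indexed-later part pi_g = y:
   pi_i - pi_g <= 2, strictly < 2 when pi_i is odd (integer differences). *)
Definition gg_near (x y : nat) : bool :=
  if odd x then x < y + 2 else x <= y + 2.

(* Göllnitz–Gordon marking: gg s is the sequence of marks aligned with s.
   The mark of the head x depends on the marks of the later (smaller) parts. *)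
Fixpoint gg (s : seq nat) : seq nat :=
  match s with
  | [::] => [::]
  | x :: s' =>
      let ms := gg s' in
      mex1 [seq pm.2 | pm <- zip s' ms & gg_near x pm.1] :: ms
  end.

Definition Nmark (i : nat) (s : seq nat) : nat := count (pred1 i) (gg s).

Definition parts_marked (i : nat) (s : seq nat) : seq nat :=
  [seq pm.1 | pm <- zip s (gg s) & pm.2 == i].

(* extended integers for pi^{(i)}_0 = +oo and pi^{(i)}_{N_i+1} = -oo *)
Inductive ext := NegInf | Fin of nat | PosInf.

Definition ext_lt (a b : ext) : bool :=
  match a, b with
  | NegInf, NegInf => false
  | NegInf, _ => true
  | Fin m, Fin n => m < n
  | Fin _, PosInf => true
  | Fin _, NegInf => false
  | PosInf, _ => false
  end.

(* pi^{(i)}_j for 0 <= j <= N_i + 1 (value for j > N_i + 1 irrelevant) *)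
Definition pmark (i : nat) (s : seq nat) (j : nat) : ext :=
  if j == 0 then PosInf
  else if j <= Nmark i s then Fin (nth 0 (parts_marked i s) j.-1)
  else NegInf.

Definition has_marked (m a : nat) (s : seq nat) : bool := (a, m) \in zip s (gg s).

Definition inC (k r : nat) (s : seq nat) : bool :=
  [&& is_partition s,
      all (fun a => odd a ==> (count (pred1 a) s <= 1)) s,
      [forall i : 'I_(size s),
         (i + k.-1 < size s) ==>
         (if odd (nth 0 s i) then nth 0 s (i + k.-1) + 2 <= nth 0 s i
          else nth 0 s (i + k.-1) + 2 < nth 0 s i)]
    & count (fun x => x <= 2) s <= r.-1].

Inductive stype := s_m1 | s_0 | s_1 | s_2 | s_3.

(* l : largest j in {0..N_2} with no odd part >= pi^{(2)}_j  (pi^{(2)}_0 = +oo) *)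
Definition start_l (s : seq nat) : nat :=
  last 0 [seq j <- iota 0 (Nmark 2 s).+1 |
          (j == 0) ||
          all (fun x => odd x ==> (x < nth 0 (parts_marked 2 s) j.-1)) s].

(* type and sigma for b = 1, with a = pi^{(2)}_1 *)
Definition st_first (s : seq nat) (a : nat) : option (stype * nat) :=
  if has_marked 1 (a - 1) s && (a + 2 \notin s) then Some (s_0, a - 1)
  else if has_marked 1 (a - 2) s && (a + 2 \notin s) then Some (s_1, a - 2)
  else if has_marked 1 (a + 2) s then Some (s_2, a + 2)
  else if has_marked 1 a s then Some (s_3, a)
  else None.

(* type and sigma for b >= 2, with a = pi^{(2)}_b and sg = sigma_{b-1} *)
Definition st_next (s : seq nat) (sg a : nat) : option (stype * nat) :=
  let cp := has_marked 1 (a + 2) s ==> (sg == a + 2) in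
  if has_marked 1 (a - 1) s && cp then Some (s_0, a - 1)
  else if has_marked 1 (a - 2) s && cp then Some (s_1, a - 2)
  else if has_marked 1 (a + 2) s && (sg != a + 2) then Some (s_2, a + 2)
  else if has_marked 1 a s then Some (s_3, a)
  else None.

(* (type_b, sigma_b) for 1 <= b, computed for increasing b *)
Fixpoint st_aux (s : seq nat) (b : nat) : option (stype * nat) :=
  match b with
  | 0 => None
  | b'.+1 =>
      let a := nth 0 (parts_marked 2 s) b' in
      if b' == 0 then st_first s a
      else match st_aux s b' with
           | None => None
           | Some (_, sg) => st_next s sg a
           end
  end.

(* starting type of pi^{(2)}_b, for 1 <= b <= N_2 (None = undefined) *)
Definition start_type (s : seq nat) (b : nat) : option stype :=
  if (1 <= b) && (b <= Nmark 2 s) then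
    if b <= start_l s then omap fst (st_aux s b) else Some s_m1
  else None.

Definition inCless (k r p t : nat) (s : seq nat) : Prop :=
  [/\ inC k r s,
      all (fun x => odd x ==> (x < 2 * t + 1)) s,
      [/\ p <= Nmark 2 s,
          ext_lt (pmark 2 s p.+1) (Fin (2 * t + 1)) &
          ext_lt (Fin (2 * t + 1)) (pmark 2 s p)],
      (pmark 2 s p = Fin (2 * t + 2) ->
         start_type s p = Some s_2 \/ start_type s p = Some s_3) &
      (pmark 2 s p.+1 = Fin (2 * t) ->
         start_type s p.+1 = Some s_0 \/ start_type s p.+1 = Some s_1)].

(* Two parts with the same Göllnitz–Gordon mark are never "near", so they
   differ by at least 2.  In a partition of C_<(k,r|p,t) every 2-marked part
   after the p-th is below 2t+1, hence these parts are positive integers at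
   most 2t that are pairwise at least 2 apart: there are at most t of them.
   Neither k nor r plays a role. *)

From mathcomp Require Import all_boot.
From mathcomp Require Import zify.

Set Implicit Arguments. Unset Strict Implicit. Unset Printing Implicit Defensive.

Lemma size_gg s : size (gg s) = size s.
Proof. by elim: s => //= x s ->. Qed.

Lemma mex1_notin L : mex1 L \notin L.
Proof.
rewrite /mex1; set F := filter _ _.
have F_gt0 : 0 < size F.
  rewrite size_filter -has_count; apply: contraT => /hasPn iotaL.
  have sub : {subset iota 1 (size L).+1 <= L} by move=> n /iotaL /negPn.
  by have := uniq_leq_size (iota_uniq 1 (size L).+1) sub; rewrite size_iota ltnn.
by have := mem_nth 0 F_gt0; rewrite mem_filter => /andP[].
Qed.

Lemma gg_head_not_near x y s :
  (y, head 0 (gg (x :: s))) \in zip s (gg s) -> ~~ gg_near x y.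
Proof.
move=> ys; apply/negP => near_xy.
have /negP := mex1_notin [seq pm.2 | pm <- zip s (gg s) & gg_near x pm.1]; apply.
by apply/mapP; exists (y, head 0 (gg (x :: s))); rewrite ?mem_filter ?near_xy.
Qed.

Lemma parts_marked_cons i x s :
  parts_marked i (x :: s) =
  if head 0 (gg (x :: s)) == i then x :: parts_marked i s else parts_marked i s.
Proof. by rewrite /parts_marked /=; case: ifP. Qed.

Lemma mem_parts_marked i y s : y \in parts_marked i s -> (y, i) \in zip s (gg s).
Proof. by case/mapP=> -[a m]; rewrite mem_filter /= => /andP[/eqP-> ?] ->. Qed.

Lemma size_parts_marked i s : size (parts_marked i s) = Nmark i s.
Proof.
rewrite /Nmark size_map size_filter.
have -> : count (fun pm : nat * nat => pm.2 == i) (zip s (gg s))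
        = count (pred1 i) (unzip2 (zip s (gg s))) by rewrite count_map.
by rewrite unzip2_zip // size_gg.
Qed.

Lemma parts_marked_sub i s : {subset parts_marked i s <= s}.
Proof.
move=> y /mem_parts_marked /(map_f fst).
by rewrite -/(unzip1 _) unzip1_zip // size_gg.
Qed.

Lemma pairwise_gap_parts_marked i s :
  pairwise (fun x y => y + 2 <= x) (parts_marked i s).
Proof.
elim: s => [|x s IH] //; rewrite parts_marked_cons.
case: eqP => // mark_x /=; rewrite IH andbT.
apply/allP => y /mem_parts_marked; rewrite -mark_x => /gg_head_not_near.
by rewrite /gg_near; case: (odd x); lia.
Qed.

Lemma size_pairwise_gap_le d t L :
  0 < d -> pairwise (fun x y => y + d <= x) L -> all (fun x => 0 < x) L ->
  head 0 L <= d * t -> size L <= t.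
Proof.
move=> d_gt0; elim: L t => [|x L IH] [|t] //= /andP[gap_x gapL] /andP[x_gt0 posL].
- by rewrite muln0; lia.
rewrite mulnS => x_le; rewrite ltnS; apply: IH => //.
by case: L gap_x {gapL posL} => //= y L /andP[yx _]; lia.
Qed.

Lemma nth_parts_marked_lt i s j n :
  0 < n -> ext_lt (pmark i s j.+1) (Fin n) -> nth 0 (parts_marked i s) j < n.
Proof.
move=> n_gt0; rewrite /pmark /=; case: ifP => // j_gt _.
by rewrite nth_default // size_parts_marked leqNgt j_gt.
Qed.

Theorem proposition2p3 (k r p t N2 : nat) (s : seq nat) :
  3 <= r -> r <= k ->
  inCless k r p t s ->
  Nmark 2 s = N2 ->
  N2 <= p + t.
Proof.
move=> _ _ [inCs _ [_ below_p _] _ _] <-.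
set L := parts_marked 2 s.
have posL : all (fun x => 0 < x) L.
  case/and4P: inCs => /andP[_ /allP pos_s] _ _ _.
  by apply/allP => y /parts_marked_sub /pos_s.
rewrite -size_parts_marked -/L -(cat_take_drop p L) size_cat size_take_min.
apply: leq_add; first exact: geq_minl.
apply: (@size_pairwise_gap_le 2) => //.
- exact: subseq_pairwise (drop_subseq _ _) (pairwise_gap_parts_marked _ _).
- by apply/allP => x /mem_drop; apply/allP.
rewrite -nth0 nth_drop addn0 -ltnS -[(2 * t).+1]addn1.
by apply: nth_parts_marked_lt below_p; rewrite addn1.
Qed.
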